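(* Let $\psi$ be the morphism on $\{a,b,c\}$ given by $\psi(a)=aabc$, $\psi(b)=bacaaabc$, $\psi(c)=bacabacabaca$. Then the infinite fixed points $\lim_n\psi^n(a)$ and $\lim_n\psi^n(b)$ of $\psi$ are $7$-automatic.
   Context: For an integer $q\ge 2$, a sequence is $q$-automatic if it is the image under a letter-to-letter map of a fixed point of a morphism all of whose letter-images have length $q$. *)

From mathcomp Require Import all_boot.
Set Implicit Arguments. Unset Strict Implicit. Unset Printing Implicit Defensive.

Inductive letter := la | lb | lc.

Definition psi (x : letter) : seq letter :=
  match x with
  | la => [:: la; la; lb; lc]
  | lb => [:: lb; la; lc; la; la; la; lb; lc]
  | lc => [:: lb; la; lc; la; lb; la; lc; la; lb; la; lc; la]
  end.

Definition psi_word (s : seq letter) : seq letter := flatten (map psi s).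

Definition prefix_of (s : seq letter) (w : nat -> letter) : Prop :=
  forall i, i < size s -> w i = nth la s i.

(* w = lim_n psi^n(x): every psi^n(x) is a prefix of w
   (the lengths |psi^n(x)| tend to infinity for x = a, b). *)
Definition is_psi_limit (x : letter) (w : nat -> letter) : Prop :=
  forall n, prefix_of (iter n psi_word [:: x]) w.

(* q-automatic: image under a letter-to-letter map tau of a fixed point u of
   a q-uniform morphism sigma on a finite alphabet A.  u = sigma(u) means
   u(q n + j) = (sigma (u n))_j for all n and j < q. *)
Definition automatic (q : nat) (B : Type) (w : nat -> B) : Prop :=
  2 <= q /\
  exists (A : finType) (sigma : A -> 'I_q -> A) (u : nat -> A) (tau : A -> B),
    (forall n (j : 'I_q), u (q * n + j) = sigma (u n) j) /\
    (forall n, w n = tau (u n)).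

From mathcomp Require Import all_boot zify.
Set Implicit Arguments. Unset Strict Implicit. Unset Printing Implicit Defensive.

(* Proof idea.  psi is not uniform, but every psi-image is a concatenation
   of the two 4-letter blocks aabc and baca:
     psi(a) = aabc,  psi(b) = baca.aabc,  psi(c) = baca.baca.baca.
   Code these blocks by six "cells": a contributes the cell 0, b the cells
   1, 2 and c the cells 3, 4, 5, where cells 0 and 2 stand for aabc and the
   others for baca.  Then psi(s) = block(cells(s)), and re-cutting a block
   into cells gives a 7-uniform morphism on cells: cells(aabc) and
   cells(baca) have 7 cells each.  Hence lim psi^n(a) (resp. b) is the
   4-uniform block image of the fixed point of this 7-uniform morphism
   starting with cell 0 (resp. cell 1). *)

Definition image_word (T U : Type) (f : T -> seq U) (s : seq T) : seq U :=
  flatten (map f s).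

Lemma image_word_cons (T U : Type) (f : T -> seq U) (x : T) (s : seq T) :
  image_word f (x :: s) = f x ++ image_word f s.
Proof. by []. Qed.

Lemma image_word_cat (T U : Type) (f : T -> seq U) (s1 s2 : seq T) :
  image_word f (s1 ++ s2) = image_word f s1 ++ image_word f s2.
Proof. by rewrite /image_word map_cat flatten_cat. Qed.

Lemma image_word_comp (T U V : Type) (f : T -> seq U) (g : U -> seq V)
    (s : seq T) :
  image_word g (image_word f s) = image_word (fun x => image_word g (f x)) s.
Proof.
elim: s => [|x s IHs] //.
by rewrite !image_word_cons image_word_cat IHs.
Qed.

Section UniformMorphism.

Variables (T U : Type) (q : nat) (f : T -> seq U).
Hypothesis size_f : forall x, size (f x) = q.

Lemma size_image_word (s : seq T) : size (image_word f s) = q * size s.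
Proof.
elim: s => [|x s IHs]; first by rewrite muln0.
by rewrite image_word_cons size_cat IHs size_f mulnS.
Qed.

Lemma nth_image_word (d : U) (e : T) (s : seq T) (n j : nat) :
  j < q -> n < size s ->
  nth d (image_word f s) (q * n + j) = nth d (f (nth e s n)) j.
Proof.
move=> lt_j_q; elim: s n => [|x s IHs] [|n] //= lt_n_s.
  by rewrite image_word_cons nth_cat size_f muln0 add0n lt_j_q.
rewrite image_word_cons nth_cat size_f ltnNge.
have -> : q <= q * n.+1 + j by nia.
by rewrite /= -IHs //; congr nth; lia.
Qed.

End UniformMorphism.

Section FixedPoint.

Variables (T : Type) (q : nat) (sub : T -> seq T) (x0 : T).
Hypotheses (q_gt1 : 1 < q) (size_sub : forall x, size (sub x) = q)
           (sub_x0 : head x0 (sub x0) = x0).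

Local Notation subw := (image_word sub).

Lemma iter_image_word_cat (m : nat) (s1 s2 : seq T) :
  iter m subw (s1 ++ s2) = iter m subw s1 ++ iter m subw s2.
Proof. by elim: m => [|m IHm] //=; rewrite IHm image_word_cat. Qed.

Lemma size_iter_image_word (m : nat) (s : seq T) :
  size (iter m subw s) = q ^ m * size s.
Proof.
elim: m => [|m IHm] /=; first by rewrite mul1n.
by rewrite (size_image_word size_sub) IHm expnS mulnA.
Qed.

Definition iterate (m : nat) : seq T := iter m subw [:: x0].

(* sub^m(x0) is a prefix of every later iterate, since sub(x0) = x0 t. *)
Lemma iterate_prefix (m k : nat) : exists r, iterate (k + m) = iterate m ++ r.
Proof.
have sub_x0E : subw [:: x0] = [:: x0] ++ behead (sub x0).
  rewrite /image_word /= cats0.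
  by case: (sub x0) (size_sub x0) sub_x0 => [|y t] /= size_x0; [lia | move->].
elim: k => [|k [r IHr]]; first by exists [::]; rewrite cats0.
exists (r ++ iter (k + m) subw (behead (sub x0))).
by rewrite /iterate addSn iterSr sub_x0E iter_image_word_cat -/(iterate _) IHr catA.
Qed.

Definition fixpt (n : nat) : T := nth x0 (iterate n) n.

Lemma nth_iterate (m n : nat) :
  n < size (iterate m) -> nth x0 (iterate m) n = fixpt n.
Proof.
have lt_n_iterate : n < size (iterate n).
  by rewrite size_iter_image_word muln1 ltn_expl.
move=> lt_n_m; have [r Em] := iterate_prefix m n.
have [r' En] := iterate_prefix n m.
transitivity (nth x0 (iterate (n + m)) n); first by rewrite Em nth_cat lt_n_m.
by rewrite addnC En nth_cat lt_n_iterate.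
Qed.

Lemma fixpt_rec (n j : nat) :
  j < q -> fixpt (q * n + j) = nth x0 (sub (fixpt n)) j.
Proof.
move=> lt_j_q; have lt_n_qn : n < q ^ n := ltn_expl n q_gt1.
have size_n : size (iterate n) = q ^ n by rewrite size_iter_image_word muln1.
rewrite -(nth_iterate (m := n.+1)); last first.
  by rewrite size_iter_image_word muln1 expnS; nia.
have -> : iterate n.+1 = subw (iterate n) by [].
by rewrite (nth_image_word size_sub x0 x0) ?size_n // nth_iterate ?size_n.
Qed.

Lemma iter_prefix_fixpt (c r : seq T) (m k i : nat) :
  c ++ r = iterate m -> i < size (iter k subw c) ->
  nth x0 (iter k subw c) i = fixpt i.
Proof.
move=> Ec lt_i; rewrite -(nth_iterate (m := k + m)).
  by rewrite /iterate iterD -/(iterate m) -Ec iter_image_word_cat nth_cat lt_i.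
by rewrite /iterate iterD -/(iterate m) -Ec iter_image_word_cat size_cat; lia.
Qed.

End FixedPoint.

Section UniformImage.

(* Cobham's closure property: if u = sigma(u) for a q-uniform sigma and w is
   the image of u under a k-uniform morphism g, then w is q-automatic.  The
   automaton reads the pairs (u(n), r) with r < k the position in the block. *)
Variables (q k : nat) (A : finType) (B : Type) (sigma : A -> 'I_q -> A)
          (u : nat -> A) (g : A -> 'I_k -> B) (w : nat -> B).
Hypotheses (q_gt1 : 1 < q) (k_gt0 : 0 < k)
           (u_fix : forall n (j : 'I_q), u (q * n + j) = sigma (u n) j)
           (w_image : forall n (r : 'I_k), w (k * n + r) = g (u n) r).

Definition ord_mod (n : nat) : 'I_k := Ordinal (ltn_pmod n k_gt0).

(* Position j of the image of position r of a block lies in block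
   (q*r+j) %/ k < q of the sigma-image. *)
Lemma block_digit_lt (r : 'I_k) (j : 'I_q) : (q * r + j) %/ k < q.
Proof. by rewrite ltn_divLR //; have := ltn_ord r; have := ltn_ord j; nia. Qed.

Definition block_digit (r : 'I_k) (j : 'I_q) : 'I_q :=
  Ordinal (block_digit_lt r j).

Definition state (n : nat) : A * 'I_k := (u (n %/ k), ord_mod n).

Definition state_sub (p : A * 'I_k) (j : 'I_q) : A * 'I_k :=
  (sigma p.1 (block_digit p.2 j), ord_mod (q * p.2 + j)).

Lemma state_fix (n : nat) (j : 'I_q) :
  state (q * n + j) = state_sub (state n) j.
Proof.
have En : q * n + j = q * (n %/ k) * k + (q * (n %% k) + j).
  by rewrite {1}(divn_eq n k) mulnDr mulnA addnA.
rewrite /state /state_sub /=; congr pair.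
  by rewrite -u_fix En divnMDl.
by apply: val_inj; rewrite /= En modnMDl.
Qed.

Lemma automatic_uniform_image : automatic q w.
Proof.
split=> //; exists (A * 'I_k)%type, state_sub, state,
  (fun p => g p.1 p.2); split; first exact: state_fix.
by move=> n; rewrite {1}(divn_eq n k) mulnC -w_image.
Qed.

End UniformImage.

Notation cell n := (@Ordinal 6 n isT).

Definition block (c : 'I_6) : seq letter :=
  if (val c == 0) || (val c == 2) then [:: la; la; lb; lc]
  else [:: lb; la; lc; la].

Definition cells_of (x : letter) : seq 'I_6 :=
  match x with
  | la => [:: cell 0]
  | lb => [:: cell 1; cell 2]
  | lc => [:: cell 3; cell 4; cell 5]
  end.

Definition cells : seq letter -> seq 'I_6 := image_word cells_of.

Definition cell_sub (c : 'I_6) : seq 'I_6 := cells (block c).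

Lemma size_block (c : 'I_6) : size (block c) = 4.
Proof. by rewrite /block; case: ifP. Qed.

Lemma size_cell_sub (c : 'I_6) : size (cell_sub c) = 7.
Proof. by rewrite /cell_sub /block; case: ifP. Qed.

Lemma psi_blocks (x : letter) : psi x = image_word block (cells_of x).
Proof. by case: x. Qed.

Lemma psi_word_blocks (s : seq letter) :
  psi_word s = image_word block (cells s).
Proof.
rewrite /cells image_word_comp /psi_word /image_word; congr flatten.
exact: (eq_map psi_blocks s).
Qed.

Lemma cells_psi_word (s : seq letter) :
  cells (psi_word s) = image_word cell_sub (cells s).
Proof. by rewrite psi_word_blocks /cells image_word_comp. Qed.

Lemma iter_psi_word (x : letter) (m : nat) :
  iter m.+1 psi_word [:: x] =
  image_word block (iter m (image_word cell_sub) (cells_of x)).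
Proof.
have cells_iter : cells (iter m psi_word [:: x]) =
                  iter m (image_word cell_sub) (cells_of x).
  elim: m => [|m IHm] /=; first by rewrite /cells image_word_cons cats0.
  by rewrite cells_psi_word IHm.
by rewrite iterS psi_word_blocks cells_iter.
Qed.

Lemma psi_limit_blocks (x : letter) (x0 : 'I_6) (m : nat) (r : seq 'I_6)
    (w : nat -> letter) :
  head x0 (cell_sub x0) = x0 -> cells_of x ++ r = iterate cell_sub x0 m ->
  is_psi_limit x w ->
  forall n (j : 'I_4), w (4 * n + j) = nth la (block (fixpt cell_sub x0 n)) j.
Proof.
move=> sub_x0 Ex lim_w n j.
set C := iter n (image_word cell_sub) (cells_of x).
have lt_n_C : n < size C.
  rewrite /C (size_iter_image_word size_cell_sub).
  have := ltn_expl n (isT : 1 < 7).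
  have : 0 < size (cells_of x) by case: (x).
  nia.
have lt_i : 4 * n + j < size (iter n.+1 psi_word [:: x]).
  rewrite iter_psi_word (size_image_word size_block) -/C.
  by have := ltn_ord j; lia.
rewrite (lim_w n.+1 _ lt_i) iter_psi_word -/C.
rewrite (nth_image_word size_block la x0) //.
by rewrite (iter_prefix_fixpt _ size_cell_sub sub_x0 Ex).
Qed.

Lemma psi_limit_automatic (x : letter) (x0 : 'I_6) (m : nat) (r : seq 'I_6)
    (w : nat -> letter) :
  head x0 (cell_sub x0) = x0 -> cells_of x ++ r = iterate cell_sub x0 m ->
  is_psi_limit x w -> automatic 7 w.
Proof.
move=> sub_x0 Ex lim_w.
apply: (automatic_uniform_image (k := 4) (u := fixpt cell_sub x0)
          (sigma := fun c j => nth x0 (cell_sub c) j)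
          (g := fun c j => nth la (block c) j)) => //.
- by move=> n j; apply: fixpt_rec => //; exact: size_cell_sub.
- by move=> n j; rewrite (psi_limit_blocks sub_x0 Ex lim_w).
Qed.

Theorem mainTheorem5 :
  (forall w : nat -> letter, is_psi_limit la w -> automatic 7 w) /\
  (forall w : nat -> letter, is_psi_limit lb w -> automatic 7 w).
Proof.
(* Cells of a = [0] = the 0th iterate from cell 0; cells of b = [1; 2] is a
   prefix of cell_sub 1 = cells(baca), the 1st iterate from cell 1. *)
split=> w lim_w.
- exact: (@psi_limit_automatic la (cell 0) 0 [::]).
- exact: (@psi_limit_automatic lb (cell 1) 1
           [:: cell 0; cell 3; cell 4; cell 5; cell 0]).
Qed.
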